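(* Consider any algorithm on any fitness function over $\{0,1\}^n$ that creates offspring from previously visited search points by standard bit mutation with mutation rate $1/n$, and assume the algorithm has created $o(n^3)$ offspring so far. Let $x\in\{0,1\}^n$ be any search point. Then the probability that a random offspring of $x$ (created by standard bit mutation) has not yet been queried is $\Omega(1)$. In particular, if the fitness function is $\mathrm{disOM}$ with distortion probability $p$, the probability that this offspring is distorted is $\Omega(p)$.
   Context: Asymptotics as $n\to\infty$. Standard bit mutation flips each bit independently with probability $1/n$. For $x\in\{0,1\}^n$, $\mathrm{OM}(x)=\sum_i x_i$. Distorted OneMax with parameters $p\in(0,1]$, $d>0$: each $x\in\{0,1\}^n$ is independently distorted with probability $p$ and clean otherwise (this randomness is fixed once and for all); $\mathrm{disOM}(x)=\mathrm{OM}(x)+d$ if $x$ is distorted, else $\mathrm{OM}(x)$. *)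

From HB Require Import structures.
From mathcomp Require Import all_boot all_order all_algebra.
From mathcomp Require Import reals.
Set Implicit Arguments. Unset Strict Implicit. Unset Printing Implicit Defensive.
Import Order.TTheory GRing.Theory Num.Theory.
Local Open Scope ring_scope.

Definition bs (n : nat) := {ffun 'I_n -> bool}.

Definition OM n (x : bs n) : nat := #|[set i | x i]|.

Definition hamming n (x y : bs n) : nat := #|[set i | x i != y i]|.

Definition mut (R : realType) n (x y : bs n) : R :=
  (n%:R^-1) ^+ hamming x y * (1 - n%:R^-1) ^+ (n - hamming x y).

Definition prob_unqueried (R : realType) n (x : bs n) (Q : {set bs n}) : R :=
  \sum_(y | y \notin Q) mut R x y.

(* Distortion pattern: d z = true iff z is distorted.  Each point is distorted
   independently with probability p: weight of a pattern d. *)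
Definition dist_weight (R : realType) n (p : R) (d : {ffun bs n -> bool}) : R :=
  \prod_z (if d z then p else 1 - p).

Definition disOM (R : realType) n (dd : R) (d : {ffun bs n -> bool}) (x : bs n) : R :=
  (OM x)%:R + (if d x then dd else 0).

(* The history h fixes the (observed) distortion status of the queried points
   in Q; a pattern d is consistent with it if it agrees with h on Q. *)
Definition consistent n (Q : {set bs n}) (h d : {ffun bs n -> bool}) : bool :=
  [forall z in Q, d z == h z].

Definition hist_weight (R : realType) n (p : R) (Q : {set bs n})
    (h : {ffun bs n -> bool}) : R :=
  \sum_(d | consistent Q h d) dist_weight p d.

(* Conditional probability (given the history h on Q), over the random
   distortion pattern and the standard bit mutation of x, that the offspring
   of x is distorted. *)
Definition prob_distorted (R : realType) n (p : R) (Q : {set bs n})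
    (h : {ffun bs n -> bool}) (x : bs n) : R :=
  (\sum_(d | consistent Q h d)
      dist_weight p d * \sum_y mut R x y * (d y)%:R) / hist_weight p Q h.

(* A fixed point at Hamming distance 3 from x is the offspring of x with
   probability n^-3 (1 - 1/n)^(n-3) >= e^-2 n^-3, and there are
   C(n,3) >= n^3/12 such points.  Once at most n^3/24 points have been queried,
   the unqueried ones among them still carry probability at least e^-2/24.
   The distortion bit of an unqueried point is independent of the observed
   history, so conditionally on that history it is set with probability p. *)
From HB Require Import structures.
From mathcomp Require Import all_boot all_order all_algebra.
From mathcomp Require Import reals.
From mathcomp.analysis Require Import sequences exp.
From mathcomp Require Import ring lra zify.
Set Implicit Arguments. Unset Strict Implicit. Unset Printing Implicit Defensive.
Import Order.TTheory GRing.Theory Num.Theory.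
Local Open Scope ring_scope.

Section MutationRate.
Variable R : realType.

Lemma expRN2M_le_1B (t : R) : 0 <= t <= 2^-1 -> expR (- (2 * t)) <= 1 - t.
Proof.
move=> /andP[t0 t2]; rewrite expRN -[_^-1]mulr1 ler_pdivrMl ?expR_gt0 //.
have quad : 1 <= (1 + 2 * t) * (1 - t).
  have : 0 <= t * (1 - 2 * t) by apply: mulr_ge0; lra.
  lra.
by apply: le_trans quad _; apply: ler_wpM2r; [lra | exact: expR_ge1Dx].
Qed.

Lemma expRN2_le_pow_1Binvn (n : nat) : (2 <= n)%N ->
  expR (-2) <= (1 - n%:R^-1) ^+ n :> R.
Proof.
move=> n2; have n0 : (0 : R) < n%:R by rewrite ltr0n; lia.
have t2 : n%:R^-1 <= 2^-1 :> R by rewrite lef_pV2 ?posrE // ler_nat.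
have -> : -2 = n%:R * (- (2 * n%:R^-1)) :> R.
  by rewrite mulrN mulrCA mulfV ?mulr1 // gt_eqF.
rewrite expRM_natl; apply: lerXn2r; rewrite ?nnegrE ?expR_ge0 //.
  by rewrite subr_ge0; apply: le_trans t2 _; lra.
by apply: expRN2M_le_1B; rewrite t2 invr_ge0 ltW.
Qed.

Lemma mut_ge0 n (x y : bs n) : 0 <= mut R x y.
Proof.
rewrite /mut; apply: mulr_ge0; apply: exprn_ge0; first by rewrite invr_ge0.
(* For n = 0 the rate is 0^-1 = 0. *)
by case: n {x y} => [|n]; rewrite ?invr0 ?subr0 // subr_ge0 invf_le1 ?ler1n.
Qed.

End MutationRate.

Definition bs_flip n (x : bs n) (S : {set 'I_n}) : bs n :=
  [ffun i => x i (+) (i \in S)].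

Lemma bs_flip_inj n (x : bs n) : injective (bs_flip x).
Proof.
move=> S1 S2 /ffunP E; apply/setP => i; have := E i; rewrite !ffunE.
by case: (x i); case: (i \in S1); case: (i \in S2).
Qed.

Lemma hamming_flip n (x : bs n) S : hamming x (bs_flip x S) = #|S|.
Proof.
by apply: eq_card => i; rewrite inE ffunE; case: (x i); case: (i \in S).
Qed.

Lemma card_hamming_sphere n (x : bs n) k :
  #|[set y | hamming x y == k]| = 'C(n, k).
Proof.
have -> : [set y | hamming x y == k] = bs_flip x @: [set S : {set 'I_n} | #|S| == k].
  apply/setP => y; rewrite inE; apply/idP/imsetP.
    move=> hy; exists [set i | x i != y i]; first by rewrite inE.
    by apply/ffunP => i; rewrite ffunE inE; case: (x i); case: (y i).
  by case=> S; rewrite inE => /eqP <- ->; rewrite hamming_flip.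
by rewrite card_imset ?card_draws ?card_ord //; exact: bs_flip_inj.
Qed.

Lemma cube_le_12_bin3 n : (6 <= n)%N -> (n ^ 3 <= 12 * 'C(n, 3))%N.
Proof.
move=> n6; have := bin_ffact n 3.
rewrite (_ : 3`! = 6) // !ffactnS ffactn0 => ffactE.
have -> : (12 * 'C(n, 3) = 2 * (n * (n.-1 * (n.-1.-1 * 1))))%N.
  by rewrite -ffactE; lia.
nia.
Qed.

Lemma prob_unqueried_ge_sphere (R : realType) n (x : bs n) (Q : {set bs n}) k :
  #|[set y | hamming x y == k] :\: Q|%:R
    * ((n%:R^-1) ^+ k * (1 - n%:R^-1) ^+ (n - k)) <= prob_unqueried R x Q.
Proof.
set A := [set y | hamming x y == k].
rewrite /prob_unqueried (bigID (mem A)) /= -[X in X <= _]addr0.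
have -> : \sum_(y | (y \notin Q) && (y \in A)) mut R x y
    = \sum_(y in A :\: Q) (n%:R^-1) ^+ k * (1 - n%:R^-1) ^+ (n - k).
  apply: eq_big => y; first by rewrite !inE andbC.
  by rewrite !inE => /andP[_ /eqP <-].
by rewrite sumr_const mulr_natl lerD ?sumr_ge0 // => y _; exact: mut_ge0.
Qed.

Lemma prob_unqueried_ge (R : realType) n (x : bs n) (Q : {set bs n}) :
  (6 <= n)%N -> #|Q|%:R <= n%:R ^+ 3 / 24 :> R ->
  expR (-2) / 24 <= prob_unqueried R x Q.
Proof.
move=> n6 hQ; have n0 : (0 : R) < n%:R by rewrite ltr0n; lia.
set A := [set y | hamming x y == 3%N].
have cardAQ : n%:R ^+ 3 / 24 <= #|A :\: Q|%:R :> R.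
  have : (n ^ 3 <= 12 * (#|A :\: Q| + #|Q|))%N.
    have : (#|A :&: Q| <= #|Q|)%N by apply/subset_leq_card/subsetIr.
    have := cube_le_12_bin3 n6; rewrite -(card_hamming_sphere x) -/A cardsD; lia.
  rewrite -(ler_nat R) natrM natrD natrX; lra.
set t : R := n%:R^-1.
have t1 : 0 <= 1 - t <= 1.
  rewrite /t subr_ge0 invf_le1 // ler1n; apply/andP; split; first lia.
  by rewrite lerBlDr lerDl invr_ge0 ltW.
have tn3 : t ^+ 3 * (n%:R ^+ 3 / 24) = 24^-1.
  by rewrite mulrA -exprMn mulVf ?gt_eqF // expr1n mul1r.
have pow_ge : expR (-2) <= (1 - t) ^+ (n - 3).
  have n2 : (2 <= n)%N by lia.
  apply: le_trans (expRN2_le_pow_1Binvn R n2) _.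
  by case/andP: t1 => ? ?; apply: ler_wiXn2l => //; rewrite leq_subr.
apply: le_trans (prob_unqueried_ge_sphere R x Q 3%N); rewrite -/A -/t.
rewrite [t ^+ 3 * _]mulrC mulrCA ler_pM ?expR_ge0 ?invr_ge0 //.
by rewrite mulrC -tn3 ler_wpM2l // exprn_ge0 // invr_ge0 ltW.
Qed.

Section Distortion.
Variables (R : realType) (n : nat) (p : R) (Q : {set bs n}) (h : {ffun bs n -> bool}).

Definition toggle_at (y : bs n) (d : {ffun bs n -> bool}) : {ffun bs n -> bool} :=
  [ffun z => if z == y then ~~ d z else d z].

Lemma toggle_atK y : involutive (toggle_at y).
Proof. by move=> d; apply/ffunP => z; rewrite !ffunE; case: eqP; rewrite ?negbK. Qed.

Lemma consistent_toggle_at y d : y \notin Q ->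
  consistent Q h (toggle_at y d) = consistent Q h d.
Proof.
move=> yQ; apply: eq_forallb => z; rewrite ffunE.
by case: (z =P y) => // ->; rewrite (negbTE yQ).
Qed.

(* Toggling the bit at y matches the consistent patterns with y clean to those
   with y distorted; matched patterns differ in weight only by (1 - p) vs p. *)
Lemma sum_consistent_distorted y : y \notin Q ->
  \sum_(d | consistent Q h d) dist_weight p d * (d y)%:R = p * hist_weight p Q h.
Proof.
move=> yQ.
pose rest (d : {ffun bs n -> bool}) := \prod_(z | z != y) (if d z then p else 1 - p).
pose S := \sum_(d | consistent Q h d && d y) rest d.
have weightE d : dist_weight p d = (if d y then p else 1 - p) * rest d.
  by rewrite /dist_weight (bigD1 y).
have clean_sum : \sum_(d | consistent Q h d && ~~ d y) rest d = S.
  rewrite (reindex_inj (can_inj (toggle_atK y))); apply: eq_big => d.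
    by rewrite consistent_toggle_at // ffunE eqxx negbK.
  by move=> _; apply: eq_bigr => z /negbTE zy; rewrite ffunE zy.
rewrite /hist_weight (bigID (fun d : {ffun bs n -> bool} => d y)) /=.
rewrite [in RHS](bigID (fun d : {ffun bs n -> bool} => d y)) /=.
rewrite [X in _ + X = _]big1 => [|d /andP[_ /negbTE ->]]; last by rewrite mulr0.
have -> : \sum_(d | consistent Q h d && d y) dist_weight p d * (d y)%:R = p * S.
  by rewrite mulr_sumr; apply: eq_bigr => d /andP[_ dy]; rewrite weightE dy mulr1.
have -> : \sum_(d | consistent Q h d && d y) dist_weight p d = p * S.
  by rewrite mulr_sumr; apply: eq_bigr => d /andP[_ dy]; rewrite weightE dy.
have -> : \sum_(d | consistent Q h d && ~~ d y) dist_weight p d = (1 - p) * S.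
  rewrite -clean_sum mulr_sumr; apply: eq_bigr => d /andP[_ /negbTE dy].
  by rewrite weightE dy.
ring.
Qed.

Lemma prob_distorted_ge (x : bs n) : 0 <= p <= 1 -> 0 < hist_weight p Q h ->
  p * prob_unqueried R x Q <= prob_distorted p Q h x.
Proof.
move=> /andP[p0 p1] H0; rewrite /prob_distorted ler_pdivlMr //.
have numE : \sum_(d | consistent Q h d) dist_weight p d * \sum_y mut R x y * (d y)%:R
    = \sum_y mut R x y * \sum_(d | consistent Q h d) dist_weight p d * (d y)%:R.
  under eq_bigr do rewrite mulr_sumr.
  by rewrite exchange_big; apply: eq_bigr => y _; rewrite mulr_sumr;
    apply: eq_bigr => d _; ring.
have unqueriedE : \sum_(y | y \notin Q) mut R x y
      * \sum_(d | consistent Q h d) dist_weight p d * (d y)%:R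
    = p * prob_unqueried R x Q * hist_weight p Q h.
  rewrite mulrAC /prob_unqueried mulr_sumr; apply: eq_bigr => y yQ.
  by rewrite sum_consistent_distorted // mulrC.
rewrite numE (bigID (mem Q)) /= unqueriedE lerDr.
apply: sumr_ge0 => y _; rewrite mulr_ge0 ?mut_ge0 ?sumr_ge0 // => d _.
by rewrite mulr_ge0 ?prodr_ge0 // => z _; case: (d z); lra.
Qed.

End Distortion.

Theorem lemma3 (R : realType) (g : nat -> nat)
  (g_o_n3 : forall eps : R, 0 < eps ->
     exists N : nat, forall n : nat, (N <= n)%N -> (g n)%:R <= eps * n%:R ^+ 3) :
  exists c : R, 0 < c /\
  exists N : nat, forall n : nat, (N <= n)%N ->
    forall (Q : {set bs n}) (x : bs n), (#|Q| <= g n)%N ->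
      c <= prob_unqueried R x Q /\
      forall (p : R) (h : {ffun bs n -> bool}),
        0 < p <= 1 -> 0 < hist_weight p Q h ->
        c * p <= prob_distorted p Q h x.
Proof.
have [N0 gN0] := g_o_n3 24^-1 ltac:(by rewrite invr_gt0).
exists (expR (-2) / 24); split; first by rewrite divr_gt0 ?expR_gt0.
exists (maxn N0 6) => n; rewrite geq_max => /andP[nN0 n6] Q x hQ.
have unqueried : expR (-2) / 24 <= prob_unqueried R x Q.
  apply: prob_unqueried_ge => //; rewrite mulrC.
  by apply: le_trans (gN0 n nN0); rewrite ler_nat.
split=> // p h /andP[p0 p1] H0.
have p01 : 0 <= p <= 1 by rewrite ltW.
apply: le_trans (prob_distorted_ge x p01 H0).
by rewrite [_ * p]mulrC ler_wpM2l // ltW.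
Qed.
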